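(* Let $\lambda_-\le\lambda_+\in(-1,1)$ and consider performance evaluation settings $\mathcal{S}_n=\{n,\mathcal{A},K,\mathcal{P},\mathcal{F},\mathcal{I},\mathcal{W}_{\lambda_-,\lambda_+}\}$, $n\ge2$, such that $\mathcal{A}\in\mathcal{A}_d$, $\mathcal{P}$, $\mathcal{I}$ and the interpolation constraints for $\mathcal{F}$ are linearly (or LMI) Gram-representable, all agents are equivalent in the PEP, $\mathcal{P}$ is scale-invariant, and $\mathcal{I}$ only contains single-agent constraints (each applied to every agent) and scale-invariant constraints. Then $w(\mathcal{S}_n)=w(\mathcal{S}_2)$ for all $n\ge2$.
   Context: Distributed optimization: $n$ agents with local functions $f_i:\mathbb{R}^d\to\mathbb{R}$ minimize $f(x)=\frac1n\sum_if_i(x)$. $\mathcal{A}_d$ is the class of algorithms built from local gradient evaluations, consensus steps $\mathbf{y}=(W\otimes I_d)\mathbf{x}$ with $W\in\mathcal{W}_{\lambda_-,\lambda_+}$, and linear combinations of an agent's local variables with known coefficients. $\mathcal{W}_{\lambda_-,\lambda_+}$ is the set of symmetric $W\in\mathbb{R}^{n\times n}$ with $\lambda_1(W)=1$, eigenvector $\mathbf{1}/\sqrt n$, other eigenvalues in $[\lambda_-,\lambda_+]$. $\mathcal{S}_n$ specifies $n$, algorithm $\mathcal{A}$, iterations $K$, criterion $\mathcal{P}$, function class $\mathcal{F}$, initial conditions $\mathcal{I}$, matrix class. Agent-dependent SDP PEP: each agent $i$ holds $p$ vector variables (iterates, consensus outputs, gradients, copies of common points such as $x^*$) as columns of $P_i\in\mathbb{R}^{d\times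 p}$ in a common order, and $q$ function values in $f_i\in\mathbb{R}^q$; variables $F=[f_1^T\dots f_n^T]$, $G=P^TP\succeq0$ with $G_{ij}=P_i^TP_j$. Gram-representable means given by finitely many linear or LMI constraints/expressions in $(F,G)$. The PEP maximizes $\mathcal{P}(F,G)$ subject to $G\succeq0$, algorithm constraints, interpolation constraints for $\mathcal{F}$, initial conditions, optimality $\frac1n\sum_i\nabla f_i(x^* )=0$, and for consensus steps with a common matrix, with $X,Y\in\mathbb{R}^{nd\times K}$ the stacked inputs/outputs: $\bar X=\bar Y$, $(Y_\perp-\lambda_-X_\perp)^T(Y_\perp-\lambda_+X_\perp)\preceq0$, $X_\perp^TY_\perp=Y_\perp^TX_\perp$ ($\bar X$: each agent component replaced by the agent average; $X_\perp=X-\bar X$). $w(\mathcal{S}_n)$ is its optimal value. Agents $i,j$ are equivalent if swapping their blocks in any feasible $(F,G)$ yields a feasible solution with equal objective. A Gram-representable expression is scale-invariant if it is a linear combination, with $n$-independent coefficients, of terms $\frac1n\sum_if_i(x_i)$, $\frac1n\sum_ix_i^Ty_i$, $\frac1{n^2}\sum_{i,j}x_i^Ty_j$; single-agent if it is a linear combination, with $n$-independent coefficients, of terms involving a single agent's variables and function. A constraint $h\le D$ inherits the property of $h$. *)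

From HB Require Import structures.
From mathcomp Require Import all_boot all_order all_algebra.
From mathcomp Require Import boolp classical_sets reals constructive_ereal ereal.
From Stdlib Require List.
Set Implicit Arguments. Unset Strict Implicit. Unset Printing Implicit Defensive.
Import Order.TTheory GRing.Theory Num.Theory.
Local Open Scope ring_scope.
Local Open Scope classical_set_scope.

(* Each agent i holds p vector variables (columns 'I_p of P_i) and q         *)
(* function values. PEP variables:                                          *)
(*   F : 'I_n -> 'I_q -> R           (F i k = k-th function value of agent i)*)
(*   G : 'I_n -> 'I_p -> 'I_n -> 'I_p -> R                                  *)
(*       (G i a j b = P_i(:,a)^T P_j(:,b), i.e. the (np)x(np) Gram matrix)   *)

Section PEP.
Variable R : realType.

(* Single-agent expression: n-independent coefficients on one agent's
   function values and on inner products of that agent's own vectors. *)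
Record sa_expr (p q : nat) := SAExpr {
  saF : 'I_q -> R;
  saG : 'I_p -> 'I_p -> R }.

(* Scale-invariant expression: n-independent coefficients of the terms
   (1/n) sum_i f_i(.),  (1/n) sum_i x_i^T y_i,  (1/n^2) sum_{i,j} x_i^T y_j. *)
Record si_expr (p q : nat) := SIExpr {
  siF : 'I_q -> R;
  siL : 'I_p -> 'I_p -> R;
  siC : 'I_p -> 'I_p -> R }.

(* An LMI constraint  M(F,G) <= D  of size m (a linear constraint h <= D is
   the case m = 1; equalities are pairs of inequalities). *)
Record sa_lmi (p q : nat) := SALmi {
  sa_m : nat;
  sa_coef : 'I_sa_m -> 'I_sa_m -> sa_expr p q;
  sa_bound : 'I_sa_m -> 'I_sa_m -> R }.

Record si_lmi (p q : nat) := SILmi {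
  si_m : nat;
  si_coef : 'I_si_m -> 'I_si_m -> si_expr p q;
  si_bound : 'I_si_m -> 'I_si_m -> R }.

Arguments sa_coef {p q} s _ _.
Arguments sa_bound {p q} s _ _.
Arguments si_coef {p q} s _ _.
Arguments si_bound {p q} s _ _.

Record setting := Setting {
  np : nat;                                 (* vector variables per agent *)
  nq : nat;                                 (* function values per agent  *)
  nK : nat;                                 (* number of consensus steps  *)
  cons_in : 'I_nK -> 'I_np;                 (* column of input x of step k *)
  cons_out : 'I_nK -> 'I_np;                (* column of output y of step k*)
  (* algorithm steps "column t = sum_a c a * column a" (known coefficients) *)
  alg_lin : seq ('I_np * ('I_np -> R));
  common_pts : seq 'I_np;                   (* copies of common points, e.g. x-star *)
  grad_star : 'I_np;                        (* column of grad f_i at x-star     *)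
  interp : seq (sa_lmi np nq);
  init_sa : seq (sa_lmi np nq);
  init_si : seq (si_lmi np nq);
  crit : si_expr np nq;
  lam_minus : R;                            (* W in W_{lam_minus, lam_plus}  *)
  lam_plus : R }.

Definition fvals (n q : nat) := 'I_n -> 'I_q -> R.
Definition gram (n p : nat) := 'I_n -> 'I_p -> 'I_n -> 'I_p -> R.

Definition psd_fun (m : nat) (M : 'I_m -> 'I_m -> R) : Prop :=
  forall v : 'I_m -> R, 0 <= \sum_(a < m) \sum_(b < m) v a * M a b * v b.

Definition gram_psd (n p : nat) (G : gram n p) : Prop :=
  (forall i a j b, G i a j b = G j b i a) /\
  (forall c : 'I_n -> 'I_p -> R,
     0 <= \sum_(i < n) \sum_(a < p) \sum_(j < n) \sum_(b < p)
            c i a * G i a j b * c j b).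

Definition eval_sa (n p q : nat) (e : sa_expr p q) (F : fvals n q)
    (G : gram n p) (i : 'I_n) : R :=
  \sum_(k < q) saF e k * F i k +
  \sum_(a < p) \sum_(b < p) saG e a b * G i a i b.

Definition eval_si (n p q : nat) (e : si_expr p q) (F : fvals n q)
    (G : gram n p) : R :=
  n%:R^-1 * \sum_(i < n) \sum_(k < q) siF e k * F i k +
  n%:R^-1 * \sum_(i < n) \sum_(a < p) \sum_(b < p) siL e a b * G i a i b +
  (n%:R ^+ 2)^-1 * \sum_(i < n) \sum_(j < n) \sum_(a < p) \sum_(b < p)
                      siC e a b * G i a j b.

Definition sa_holds (n p q : nat) (C : sa_lmi p q) (F : fvals n q)
    (G : gram n p) (i : 'I_n) : Prop :=
  psd_fun (fun a b => sa_bound C a b - eval_sa (sa_coef C a b) F G i).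

Definition si_holds (n p q : nat) (C : si_lmi p q) (F : fvals n q)
    (G : gram n p) : Prop :=
  psd_fun (fun a b => si_bound C a b - eval_si (si_coef C a b) F G).

(* sum_i (u_i - ubar)^T (v_i - vbar), for columns u = a, v = b *)
Definition ip_perp (n p : nat) (G : gram n p) (a b : 'I_p) : R :=
  \sum_(i < n) G i a i b - n%:R^-1 * \sum_(i < n) \sum_(j < n) G i a j b.

(* || sum_i (u_i - v_i) ||^2 *)
Definition mean_diff_sq (n p : nat) (G : gram n p) (a b : 'I_p) : R :=
  \sum_(i < n) \sum_(j < n) (G i a j a - G i a j b - G i b j a + G i b j b).

Definition feasible (S : setting) (n : nat) (F : fvals n (nq S))
    (G : gram n (np S)) : Prop :=
  let lm := lam_minus S in let lp := lam_plus S in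
  let X := @cons_in S in let Y := @cons_out S in
  [/\ gram_psd G,
      (* algorithm: linear combinations within each agent *)
      (forall t, Stdlib.Lists.List.In t (alg_lin S) -> forall i : 'I_n,
         let w := fun a => (a == t.1)%:R - t.2 a in
         \sum_(a < np S) \sum_(b < np S) w a * w b * G i a i b = 0),
      (forall C, Stdlib.Lists.List.In C (interp S) -> forall i, sa_holds C F G i) /\
      ((forall C, Stdlib.Lists.List.In C (init_sa S) -> forall i, sa_holds C F G i) /\
       (forall C, Stdlib.Lists.List.In C (init_si S) -> si_holds C F G)),
      (* common points and optimality  (1/n) sum_i grad f_i(x-star) = 0 *)
      ((forall c, c \in common_pts S -> ip_perp G c c = 0) /\
       \sum_(i < n) \sum_(j < n) G i (grad_star S) j (grad_star S) = 0) &
      (* consensus steps with a common W in W_{lm,lp} *)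
      [/\ (forall k, mean_diff_sq G (X k) (Y k) = 0),
          (forall k l, ip_perp G (X k) (Y l) = ip_perp G (Y k) (X l)) &
          psd_fun (fun k l => - (ip_perp G (Y k) (Y l) - lp * ip_perp G (Y k) (X l)
                                 - lm * ip_perp G (X k) (Y l)
                                 + lm * lp * ip_perp G (X k) (X l)))]].

(* optimal value w(S_n) of the PEP (sup over feasible set, -oo if empty) *)
Definition pep_value (S : setting) (n : nat) : \bar R :=
  ereal_sup [set x | exists (F : fvals n (nq S)) (G : gram n (np S)),
                       @feasible S n F G /\ x = (eval_si (crit S) F G)%:E].

Definition swap_idx (n : nat) (i j k : 'I_n) : 'I_n :=
  if k == i then j else if k == j then i else k.

Definition agents_equivalent (S : setting) (n : nat) : Prop :=
  forall (i j : 'I_n) (F : fvals n (nq S)) (G : gram n (np S)),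
    @feasible S n F G ->
    let F' := fun k => F (swap_idx i j k) in
    let G' := fun k a l b => G (swap_idx i j k) a (swap_idx i j l) b in
    @feasible S n F' G' /\ eval_si (crit S) F' G' = eval_si (crit S) F G.

End PEP.

(* A point (F, G) of the PEP on m agents is seen by the objective and by the
   constraints only through per-agent LMIs on each agent's own block, which are
   convex, and through the averages f = (1/m) sum_i f_i, A = (1/m) sum_i G_ii and
   C = (1/m^2) sum_(i,j) G_ij; in particular sum_i (u_i - u_bar)^T (v_i - v_bar) = m (A - C).
   Give each of n >= 2 agents the function values f and the diagonal block A, and
   make every off-diagonal block (n C - A) / (n - 1). This point has the same
   averages, is positive semidefinite because C >= 0 and A - C >= 0, satisfies
   every per-agent LMI by averaging, and scales the consensus quantities by n/m.
   So the sets of feasible objective values coincide for all n >= 2. *)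

From HB Require Import structures.
From mathcomp Require Import all_boot all_order all_algebra.
From mathcomp Require Import boolp classical_sets reals constructive_ereal ereal.
From mathcomp Require Import ring.
Import Order.TTheory GRing.Theory Num.Theory.
Local Open Scope ring_scope.
Set Implicit Arguments. Unset Strict Implicit. Unset Printing Implicit Defensive.

Lemma sum_delta (R : pzSemiRingType) (n : nat) (i : 'I_n) (f : 'I_n -> R) :
  \sum_(j < n) (i == j)%:R * f j = f i.
Proof.
rewrite (bigD1 i) //= eqxx mul1r big1 ?addr0 // => j /negbTE.
by rewrite eq_sym => ->; rewrite mul0r.
Qed.

Section BilinearForm.
Variables (R : comPzRingType) (p : nat).
Implicit Types (M X Y : 'I_p -> 'I_p -> R) (u w : 'I_p -> R) (r : R).

Definition bform M u w : R := \sum_(a < p) \sum_(b < p) u a * M a b * w b.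

Lemma bform_sumM (I : Type) (s : seq I) (P : pred I) (M : I -> 'I_p -> 'I_p -> R) u w :
  bform (fun a b => \sum_(i <- s | P i) M i a b) u w
  = \sum_(i <- s | P i) bform (M i) u w.
Proof.
rewrite /bform; under eq_bigr do under eq_bigr do rewrite mulr_sumr mulr_suml.
under eq_bigr do rewrite exchange_big.
by rewrite exchange_big.
Qed.

Lemma bformMZ r M u w : bform (fun a b => r * M a b) u w = r * bform M u w.
Proof.
rewrite /bform mulr_sumr; apply: eq_bigr => a _.
rewrite mulr_sumr; apply: eq_bigr => b _; ring.
Qed.

Lemma bformMB X Y u w :
  bform (fun a b => X a b - Y a b) u w = bform X u w - bform Y u w.
Proof.
rewrite /bform -sumrB; apply: eq_bigr => a _.
rewrite -sumrB; apply: eq_bigr => b _; ring.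
Qed.

Lemma bformZl r M u w : bform M (fun a => r * u a) w = r * bform M u w.
Proof.
rewrite /bform mulr_sumr; apply: eq_bigr => a _.
rewrite mulr_sumr; apply: eq_bigr => b _; ring.
Qed.

Lemma bformZr r M u w : bform M u (fun b => r * w b) = r * bform M u w.
Proof.
rewrite /bform mulr_sumr; apply: eq_bigr => a _.
rewrite mulr_sumr; apply: eq_bigr => b _; ring.
Qed.

Lemma bformBl M u u' w :
  bform M (fun a => u a - u' a) w = bform M u w - bform M u' w.
Proof.
rewrite /bform -sumrB; apply: eq_bigr => a _.
rewrite -sumrB; apply: eq_bigr => b _; ring.
Qed.

Lemma bformBr M u w w' :
  bform M u (fun b => w b - w' b) = bform M u w - bform M u w'.
Proof.
rewrite /bform -sumrB; apply: eq_bigr => a _.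
rewrite -sumrB; apply: eq_bigr => b _; ring.
Qed.

Lemma bform_suml n (c : 'I_n -> 'I_p -> R) M w :
  bform M (fun a => \sum_(k < n) c k a) w = \sum_(k < n) bform M (c k) w.
Proof.
rewrite /bform; under eq_bigr do under eq_bigr do rewrite !mulr_suml.
under eq_bigr do rewrite exchange_big.
by rewrite exchange_big.
Qed.

Lemma bform_sumr n (c : 'I_n -> 'I_p -> R) M u :
  bform M u (fun b => \sum_(k < n) c k b) = \sum_(k < n) bform M u (c k).
Proof.
rewrite /bform; under eq_bigr do under eq_bigr do rewrite mulr_sumr.
under eq_bigr do rewrite exchange_big.
by rewrite exchange_big.
Qed.

Lemma sum_bform_centered n r M (c : 'I_n -> 'I_p -> R) : n%:R * r = 1 ->
  \sum_(i < n) bform M (fun a => c i a - r * \sum_(k < n) c k a)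
                     (fun a => c i a - r * \sum_(k < n) c k a)
  = \sum_(i < n) bform M (c i) (c i)
    - r * bform M (fun a => \sum_(k < n) c k a) (fun a => \sum_(k < n) c k a).
Proof.
move=> nr1; set s := fun a => \sum_(k < n) c k a.
under eq_bigr do rewrite bformBl !bformBr !bformZl !bformZr.
rewrite !sumrB -!mulr_sumr sumr_const card_ord -bform_suml -bform_sumr.
rewrite -mulr_natl -/s.
have -> : r * (r * (n%:R * bform M s s)) = r * (n%:R * r) * bform M s s by ring.
by rewrite nr1; ring.
Qed.

End BilinearForm.

Lemma natr_neq0 (R : numDomainType) (n : nat) : (0 < n)%N -> (n%:R : R) != 0.
Proof. by rewrite pnatr_eq0 -lt0n. Qed.

Lemma natrB1_neq0 (R : numDomainType) (n : nat) : (1 < n)%N -> (n%:R - 1 : R) != 0.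
Proof. by move=> n_gt1; rewrite subr_eq0 pnatr_eq1 gtn_eqF. Qed.

Section PsdForms.
Variable R : realType.

Lemma psd_scale m (M : 'I_m -> 'I_m -> R) r :
  0 <= r -> psd_fun M -> psd_fun (fun a b => r * M a b).
Proof.
move=> r_ge0 psdM v; change (0 <= bform (fun a b => r * M a b) v v).
by rewrite bformMZ; apply: mulr_ge0 => //; apply: psdM.
Qed.

Lemma psd_mean n m (D : 'I_m -> 'I_m -> R) (E : 'I_n -> 'I_m -> 'I_m -> R) :
  (0 < n)%N -> (forall i, psd_fun (fun a b => D a b - E i a b)) ->
  psd_fun (fun a b => D a b - n%:R^-1 * \sum_(i < n) E i a b).
Proof.
move=> n_gt0 psdE v.
change (0 <= bform (fun a b => D a b - n%:R^-1 * \sum_(i < n) E i a b) v v).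
have -> : bform (fun a b => D a b - n%:R^-1 * \sum_(i < n) E i a b) v v
        = n%:R^-1 * \sum_(i < n) bform (fun a b => D a b - E i a b) v v.
  under [in RHS]eq_bigr do rewrite bformMB.
  rewrite bformMB bformMZ bform_sumM sumrB sumr_const card_ord.
  rewrite -[bform D v v *+ n]mulr_natl.
  by rewrite mulrBr mulrA mulVf ?mul1r ?natr_neq0.
by apply: mulr_ge0; [rewrite invr_ge0 ler0n | apply: sumr_ge0 => i _; apply: psdE].
Qed.

Lemma psd_centered_ge0 n (g : 'I_n -> 'I_n -> R) : (0 < n)%N -> psd_fun g ->
  0 <= \sum_(i < n) g i i - n%:R^-1 * \sum_(i < n) \sum_(j < n) g i j.
Proof.
move=> n_gt0 psdg.
pose e (k a : 'I_n) : R := (k == a)%:R.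
have bform_e k : bform g (e k) (e k) = g k k.
  rewrite /bform -[RHS](sum_delta k (fun a => g a k)); apply: eq_bigr => a _.
  rewrite -[RHS](sum_delta k (fun b => e k a * g a b)).
  by apply: eq_bigr => b _; rewrite mulrC.
have sum_e : (fun a => \sum_(k < n) e k a) = fun=> 1.
  apply/funext => a; rewrite -[RHS](sum_delta a (fun=> 1)).
  by apply: eq_bigr => k _; rewrite mulr1 eq_sym.
have bform_1 : bform g (fun=> 1) (fun=> 1) = \sum_(i < n) \sum_(j < n) g i j.
  by apply: eq_bigr => i _; apply: eq_bigr => j _; rewrite mulr1 mul1r.
have := sum_bform_centered g e (mulfV (natr_neq0 R n_gt0)).
under [in RHS]eq_bigr do rewrite bform_e.
rewrite sum_e bform_1 => <-.
by apply: sumr_ge0 => i _; apply: psdg.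
Qed.

End PsdForms.

Section GramMeans.
Variables (R : realType) (n p : nat).
Implicit Type G : gram R n p.

Definition block G (i j : 'I_n) : 'I_p -> 'I_p -> R := fun a b => G i a j b.

Definition mean_diag G a b : R := n%:R^-1 * \sum_(i < n) G i a i b.

Definition mean_all G a b : R :=
  (n%:R ^+ 2)^-1 * \sum_(i < n) \sum_(j < n) G i a j b.

Lemma gram_formE G (c : 'I_n -> 'I_p -> R) :
  \sum_(i < n) \sum_(a < p) \sum_(j < n) \sum_(b < p) c i a * G i a j b * c j b
  = \sum_(i < n) \sum_(j < n) bform (block G i j) (c i) (c j).
Proof. by apply: eq_bigr => i _; rewrite exchange_big. Qed.

Lemma gram_psd_block_form G v :
  gram_psd G -> psd_fun (fun i j => bform (block G i j) v v).
Proof.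
move=> [_ psdG] al.
under eq_bigr do under eq_bigr do rewrite mulrAC -mulrA -bformZr -bformZl.
by have := psdG (fun i a => al i * v a); rewrite gram_formE.
Qed.

Lemma bform_mean_diag G u w :
  bform (mean_diag G) u w = n%:R^-1 * \sum_(i < n) bform (block G i i) u w.
Proof. by rewrite /mean_diag bformMZ bform_sumM. Qed.

Lemma bform_mean_all G u w :
  bform (mean_all G) u w
  = (n%:R ^+ 2)^-1 * \sum_(i < n) \sum_(j < n) bform (block G i j) u w.
Proof. by rewrite /mean_all bformMZ bform_sumM; under eq_bigr do rewrite bform_sumM. Qed.

Lemma mean_all_psd G : gram_psd G -> psd_fun (mean_all G).
Proof.
move=> psdG v; change (0 <= bform (mean_all G) v v).
rewrite bform_mean_all; apply: mulr_ge0; first by rewrite invr_ge0 exprn_ge0.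
have := gram_psd_block_form v psdG (fun=> 1).
by under eq_bigr do under eq_bigr do rewrite mulr1 mul1r.
Qed.

Lemma mean_diag_sub_all_psd G : (0 < n)%N -> gram_psd G ->
  psd_fun (fun a b => mean_diag G a b - mean_all G a b).
Proof.
move=> n_gt0 psdG v.
change (0 <= bform (fun a b => mean_diag G a b - mean_all G a b) v v).
rewrite bformMB bform_mean_diag bform_mean_all -exprVn expr2 -mulrA -mulrBr.
apply: mulr_ge0; first by rewrite invr_ge0.
exact: psd_centered_ge0 n_gt0 (gram_psd_block_form v psdG).
Qed.

Lemma mean_diagC G a b : gram_psd G -> mean_diag G a b = mean_diag G b a.
Proof. by move=> [symG _]; congr (_ * _); apply: eq_bigr => i _. Qed.

Lemma mean_allC G a b : gram_psd G -> mean_all G a b = mean_all G b a.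
Proof.
move=> [symG _]; rewrite /mean_all exchange_big; congr (_ * _).
by apply: eq_bigr => j _; apply: eq_bigr => i _.
Qed.

Hypothesis n_gt0 : (0 < n)%N.

Lemma ip_perp_means G a b :
  ip_perp G a b = n%:R * (mean_diag G a b - mean_all G a b).
Proof.
have n0 := natr_neq0 R n_gt0.
by rewrite /ip_perp /mean_diag /mean_all; field.
Qed.

Lemma sum_gram_mean_all G a b :
  \sum_(i < n) \sum_(j < n) G i a j b = n%:R ^+ 2 * mean_all G a b.
Proof.
by rewrite /mean_all mulrA mulfV ?mul1r // expf_neq0 // natr_neq0.
Qed.

Lemma mean_diff_sq_means G a b : mean_diff_sq G a b
  = n%:R ^+ 2 * (mean_all G a a - mean_all G a b - mean_all G b a + mean_all G b b).
Proof.
rewrite !mulrDr !mulrN -!sum_gram_mean_all /mean_diff_sq.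
rewrite -!sumrB -big_split; apply: eq_bigr => i _.
by rewrite -!sumrB -big_split.
Qed.

End GramMeans.

Lemma sum_mulr_mean (R : comPzRingType) (I J : Type) (u : seq I) (t : seq J)
    (r : R) (s : J -> R) (F : I -> J -> R) :
  \sum_(j <- t) s j * (r * \sum_(i <- u) F i j)
  = r * \sum_(i <- u) \sum_(j <- t) s j * F i j.
Proof.
rewrite exchange_big mulr_sumr; apply: eq_bigr => j _.
by rewrite mulrCA mulr_sumr.
Qed.

Section SymmetricPoint.
Variables (R : realType) (p q : nat).

Definition sa_value (e : sa_expr R p q) (f : 'I_q -> R) (A : 'I_p -> 'I_p -> R) : R :=
  \sum_(k < q) saF e k * f k + \sum_(a < p) \sum_(b < p) saG e a b * A a b.

Definition si_value (e : si_expr R p q) (f : 'I_q -> R) (A C : 'I_p -> 'I_p -> R) : R :=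
  \sum_(k < q) siF e k * f k + \sum_(a < p) \sum_(b < p) siL e a b * A a b
  + \sum_(a < p) \sum_(b < p) siC e a b * C a b.

Definition mean_fval n (F : fvals R n q) k : R := n%:R^-1 * \sum_(i < n) F i k.

Lemma mean_eval_sa n e (F : fvals R n q) (G : gram R n p) :
  n%:R^-1 * \sum_(i < n) eval_sa e F G i = sa_value e (mean_fval F) (mean_diag G).
Proof.
rewrite /eval_sa /sa_value big_split mulrDr sum_mulr_mean; congr (_ + _).
under [RHS]eq_bigr do rewrite sum_mulr_mean.
by rewrite -mulr_sumr exchange_big.
Qed.

Lemma eval_si_means n e (F : fvals R n q) (G : gram R n p) :
  eval_si e F G = si_value e (mean_fval F) (mean_diag G) (mean_all G).
Proof.
rewrite /eval_si /si_value sum_mulr_mean; congr (_ + _ + _).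
  under [RHS]eq_bigr do rewrite sum_mulr_mean.
  by rewrite -mulr_sumr exchange_big.
under [RHS]eq_bigr do rewrite sum_mulr_mean.
rewrite -mulr_sumr [in RHS]exchange_big; congr (_ * _); apply: eq_bigr => i _.
under [RHS]eq_bigr do under eq_bigr do rewrite mulr_sumr.
by under [RHS]eq_bigr do rewrite exchange_big; rewrite [in RHS]exchange_big.
Qed.

Definition sym_fvals n (f : 'I_q -> R) : fvals R n q := fun _ => f.

(* The off-diagonal blocks make the mean of all n^2 blocks equal to C
   (for n > 1; the division by n - 1 = 0 is junk when n = 1). *)
Definition sym_gram n (A C : 'I_p -> 'I_p -> R) : gram R n p :=
  fun i a j b => if i == j then A a b else (n%:R * C a b - A a b) / (n%:R - 1).

Arguments sym_fvals n f : clear implicits.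
Arguments sym_gram n A C : clear implicits.

Lemma eval_sa_sym_gram n e f A C i :
  eval_sa e (sym_fvals n f) (sym_gram n A C) i = sa_value e f A.
Proof. by rewrite /eval_sa /sym_gram eqxx. Qed.

Lemma mean_fval_sym_fvals n f k : (0 < n)%N -> mean_fval (sym_fvals n f) k = f k.
Proof.
move=> n_gt0; rewrite /mean_fval sumr_const card_ord -[f k *+ n]mulr_natl.
by rewrite mulrA mulVf ?mul1r ?natr_neq0.
Qed.

Lemma mean_diag_sym_gram n A C a b : (0 < n)%N -> mean_diag (sym_gram n A C) a b = A a b.
Proof.
move=> n_gt0; rewrite /mean_diag /sym_gram.
under eq_bigr do rewrite eqxx.
by rewrite sumr_const card_ord -[A a b *+ n]mulr_natl mulrA mulVf ?mul1r ?natr_neq0.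
Qed.

Lemma mean_all_sym_gram n A C a b : (1 < n)%N -> mean_all (sym_gram n A C) a b = C a b.
Proof.
move=> n_gt1; have n0 := natr_neq0 R (ltnW n_gt1).
have n10 := natrB1_neq0 R n_gt1.
set B := (n%:R * C a b - A a b) / (n%:R - 1).
have row_sum i : \sum_(j < n) sym_gram n A C i a j b = n%:R * B + (A a b - B).
  rewrite (eq_bigr (fun j => B + (i == j)%:R * (A a b - B))) => [|j _].
    by rewrite big_split sum_delta sumr_const card_ord mulr_natl.
  by rewrite /sym_gram; case: (i == j); rewrite ?mul1r ?mul0r ?addr0 // addrC subrK.
rewrite /mean_all (eq_bigr _ (fun i _ => row_sum i)) sumr_const card_ord.
by rewrite -[(_ + _) *+ n]mulr_natl /B; field; rewrite n0 n10.
Qed.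

Lemma sym_gram_psd n (A C : 'I_p -> 'I_p -> R) : (1 < n)%N ->
  (forall a b, A a b = A b a) -> (forall a b, C a b = C b a) ->
  psd_fun C -> psd_fun (fun a b => A a b - C a b) -> gram_psd (sym_gram n A C).
Proof.
move=> n_gt1 symA symC psdC psdM; split.
  move=> i a j b; rewrite /sym_gram eq_sym.
  by case: (j == i); rewrite (symA a b) // (symC a b).
move=> c; rewrite gram_formE.
have n0 := natr_neq0 R (ltnW n_gt1); have n10 := natrB1_neq0 R n_gt1.
pose B a b := (n%:R * C a b - A a b) / (n%:R - 1).
pose M a b := A a b - C a b.
set s := fun a => \sum_(k < n) c k a.
(* The form is s^T C s + n/(n-1) sum_i (c_i - s/n)^T M (c_i - s/n). *)
have -> : \sum_(i < n) \sum_(j < n) bform (block (sym_gram n A C) i j) (c i) (c j)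
        = bform B s s + \sum_(i < n) bform (fun a b => A a b - B a b) (c i) (c i).
  rewrite bform_suml -big_split; apply: eq_bigr => i _.
  rewrite bform_sumr bformMB (bigD1 i) // [in RHS](bigD1 i) //=.
  rewrite /block /sym_gram eqxx [RHS]addrC addrA subrK; congr (_ + _).
  by apply: eq_bigr => j; rewrite eq_sym => /negbTE ->.
have -> : bform B s s = bform C s s - (n%:R - 1)^-1 * bform M s s.
  rewrite -bformMZ -bformMB; congr (bform _ s s).
  by apply/funext => a; apply/funext => b; rewrite /B /M; field.
have eAB i : bform (fun a b => A a b - B a b) (c i) (c i)
           = n%:R / (n%:R - 1) * bform M (c i) (c i).
  rewrite -bformMZ; congr (bform _ _ _).
  by apply/funext => a; apply/funext => b; rewrite /B /M; field.
under eq_bigr do rewrite eAB.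
rewrite -mulr_sumr.
have -> : forall x y z : R, x - (n%:R - 1)^-1 * y + n%:R / (n%:R - 1) * z
                          = x + n%:R / (n%:R - 1) * (z - n%:R^-1 * y).
  by move=> x y z; field; rewrite n0 n10.
rewrite -(sum_bform_centered M c (mulfV n0)).
apply: addr_ge0; first exact: psdC.
apply: mulr_ge0; first by rewrite divr_ge0 // subr_ge0 ler1n ltnW.
by apply: sumr_ge0 => i _; apply: psdM.
Qed.

End SymmetricPoint.

Arguments sym_fvals {R q} n f.
Arguments sym_gram {R p} n A C.

Lemma eq_psd_fun (R : realType) m (M M' : 'I_m -> 'I_m -> R) :
  M =2 M' -> psd_fun M -> psd_fun M'.
Proof. by move=> eqM psdM v; under eq_bigr do under eq_bigr do rewrite -eqM. Qed.

Section Symmetrization.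
Variables (R : realType) (S : setting R) (m n : nat).
Hypotheses (m_gt0 : (0 < m)%N) (n_gt1 : (1 < n)%N).
Variables (F : fvals R m (nq S)) (G : gram R m (np S)).

Let n_gt0 : (0 < n)%N := ltnW n_gt1.
Let Fs := sym_fvals n (mean_fval F).
Let Gs := sym_gram n (mean_diag G) (mean_all G).

Lemma eval_si_symmetrize e : eval_si e Fs Gs = eval_si e F G.
Proof.
rewrite !eval_si_means; congr si_value; apply/funext => a.
- exact: mean_fval_sym_fvals.
- by apply/funext => b; apply: mean_diag_sym_gram.
- by apply/funext => b; apply: mean_all_sym_gram.
Qed.

Lemma ip_perp_symmetrize a b : ip_perp Gs a b = n%:R / m%:R * ip_perp G a b.
Proof.
have m0 := natr_neq0 R m_gt0.
by rewrite !ip_perp_means // mean_diag_sym_gram // mean_all_sym_gram //; field.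
Qed.

Lemma sum_gram_symmetrize a b :
  \sum_(i < n) \sum_(j < n) Gs i a j b
  = (n%:R / m%:R) ^+ 2 * \sum_(i < m) \sum_(j < m) G i a j b.
Proof.
have m0 := natr_neq0 R m_gt0.
by rewrite !sum_gram_mean_all // mean_all_sym_gram //; field.
Qed.

Lemma mean_diff_sq_symmetrize a b :
  mean_diff_sq Gs a b = (n%:R / m%:R) ^+ 2 * mean_diff_sq G a b.
Proof.
have m0 := natr_neq0 R m_gt0.
by rewrite !mean_diff_sq_means // !mean_all_sym_gram //; field.
Qed.

Lemma sa_holds_symmetrize (C : sa_lmi R (np S) (nq S)) :
  (forall i, sa_holds C F G i) -> forall i, sa_holds C Fs Gs i.
Proof.
move=> holdsC i; apply: eq_psd_fun (psd_mean m_gt0 holdsC) => a b.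
by rewrite eval_sa_sym_gram mean_eval_sa.
Qed.

Lemma feasible_symmetrize : feasible F G -> feasible Fs Gs.
Proof.
move=> [psdG alg [interp [init_sa init_si]] [common grad] [cons_mean cons_sym cons_psd]].
split.
- apply: sym_gram_psd => // [a b|a b||]; first exact: mean_diagC.
  + exact: mean_allC.
  + exact: mean_all_psd.
  + exact: mean_diag_sub_all_psd.
- move=> t t_alg i w.
  have bform_w (H : 'I_(np S) -> 'I_(np S) -> R) :
      \sum_(a < np S) \sum_(b < np S) w a * w b * H a b = bform H w w.
    by apply: eq_bigr => a _; apply: eq_bigr => b _; rewrite mulrAC.
  rewrite (bform_w (block Gs i i)) /block /Gs /sym_gram eqxx bform_mean_diag.
  by rewrite big1 ?mulr0 // => j _; rewrite -bform_w; apply: alg.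
- split; first by move=> C /interp; apply: sa_holds_symmetrize.
  split; first by move=> C /init_sa; apply: sa_holds_symmetrize.
  by move=> C /init_si; apply: eq_psd_fun => a b; rewrite eval_si_symmetrize.
- split; last by rewrite sum_gram_symmetrize grad mulr0.
  by move=> x /common; rewrite ip_perp_symmetrize => ->; rewrite mulr0.
- split.
  + by move=> k; rewrite mean_diff_sq_symmetrize cons_mean mulr0.
  + by move=> k l; rewrite !ip_perp_symmetrize cons_sym.
  + have ratio_ge0 : 0 <= n%:R / m%:R :> R by rewrite divr_ge0.
    apply: eq_psd_fun (psd_scale ratio_ge0 cons_psd) => k l.
    by rewrite !ip_perp_symmetrize; ring.
Qed.

End Symmetrization.

Definition pep_objectives (R : realType) (S : setting R) (n : nat) : set (\bar R) :=
  [set x | exists (F : fvals R n (nq S)) (G : gram R n (np S)),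
             feasible F G /\ x = (eval_si (crit S) F G)%:E].

Lemma pep_objectives_sub (R : realType) (S : setting R) (m n : nat) :
  (0 < m)%N -> (1 < n)%N -> (pep_objectives S m `<=` pep_objectives S n)%classic.
Proof.
move=> m_gt0 n_gt1 x [F [G [feasFG ->]]].
exists (sym_fvals n (mean_fval F)), (sym_gram n (mean_diag G) (mean_all G)).
by split; [exact: feasible_symmetrize | rewrite eval_si_symmetrize].
Qed.

Lemma pep_value_eq (R : realType) (S : setting R) (m n : nat) :
  (1 < m)%N -> (1 < n)%N -> pep_value S m = pep_value S n.
Proof.
move=> m_gt1 n_gt1.
change (ereal_sup (pep_objectives S m) = ereal_sup (pep_objectives S n)).
by congr ereal_sup; apply/seteqP; split; apply: pep_objectives_sub => //; exact: ltnW.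
Qed.

Unset Implicit Arguments.

Theorem corollary2 (R : realType) (S : setting R) :
  -1 < lam_minus S -> lam_minus S <= lam_plus S -> lam_plus S < 1 ->
  (forall n : nat, (2 <= n)%N -> agents_equivalent S n) ->
  forall n : nat, (2 <= n)%N -> pep_value S n = pep_value S 2.
Proof.
by move=> _ _ _ _ n n_ge2; apply: pep_value_eq.
Qed.
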